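(* The Gromov--Hausdorff distance $d_{\mathrm{GH}}$ and the modified Gromov--Hausdorff distance $\widehat{d}_{\mathrm{GH}}$ are not Lipschitz-equivalent, even when restricted to finite ultrametric spaces: for every $C>0$ there exist finite ultrametric spaces $X,Y$ with $d_{\mathrm{GH}}(X,Y)> C\,\widehat{d}_{\mathrm{GH}}(X,Y)$.
   Context: A metric space $X$ is ultrametric if $d_X(x,x'')\le\max\{d_X(x,x'),d_X(x',x'')\}$ for all $x,x',x''\in X$. For a map $f:X\to Y$ between metric spaces, $\operatorname{dis}(f)=\sup_{x,x'\in X}|d_X(x,x')-d_Y(f(x),f(x'))|$. For $f:X\to Y$, $g:Y\to X$, $\operatorname{codis}(f,g)=\sup_{x\in X,y\in Y}|d_X(x,g(y))-d_Y(f(x),y)|$. For compact metric spaces, $d_{\mathrm{GH}}(X,Y)$ is the Gromov--Hausdorff distance (infimum over metric spaces $Z$ and isometric embeddings of $X,Y$ into $Z$ of the Hausdorff distance of the images); equivalently $d_{\mathrm{GH}}(X,Y)=\frac12\inf_{f,g}\max\{\operatorname{dis}(f),\operatorname{dis}(g),\operatorname{codis}(f,g)\}$. The modified Gromov--Hausdorff distance is $\widehat{d}_{\mathrm{GH}}(X,Y)=\frac12\max\{\inf_{f:X\to Y}\operatorname{dis}(f),\inf_{g:Y\to X}\operatorname{dis}(g)\}$. *)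

From HB Require Import structures.
From mathcomp Require Import all_boot all_order all_algebra.
From mathcomp Require Import boolp classical_sets reals.
Set Implicit Arguments. Unset Strict Implicit. Unset Printing Implicit Defensive.
Import Order.TTheory GRing.Theory Num.Theory.
Local Open Scope ring_scope.
Local Open Scope classical_set_scope.

Section GH.
Variable R : realType.

Definition is_metric (T : Type) (d : T -> T -> R) : Prop :=
  [/\ forall x y, d x y = 0 <-> x = y,
      forall x y, d x y = d y x &
      forall x y z, d x z <= d x y + d y z].

Definition is_ultrametric (T : Type) (d : T -> T -> R) : Prop :=
  forall x x' x'', d x x'' <= Num.max (d x x') (d x' x'').

Definition dis (X Y : Type) (dX : X -> X -> R) (dY : Y -> Y -> R) (f : X -> Y) : R :=
  sup [set r | exists x x' : X, r = `| dX x x' - dY (f x) (f x') |].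

Definition codis (X Y : Type) (dX : X -> X -> R) (dY : Y -> Y -> R)
  (f : X -> Y) (g : Y -> X) : R :=
  sup [set r | exists (x : X) (y : Y), r = `| dX x (g y) - dY (f x) y |].

(* Gromov--Hausdorff distance, via the dis/codis formula *)
Definition dGH (X Y : Type) (dX : X -> X -> R) (dY : Y -> Y -> R) : R :=
  2^-1 * inf [set r | exists (f : X -> Y) (g : Y -> X),
     r = Num.max (dis dX dY f) (Num.max (dis dY dX g) (codis dX dY f g))].

Definition dGH_mod (X Y : Type) (dX : X -> X -> R) (dY : Y -> Y -> R) : R :=
  2^-1 * Num.max (inf [set r | exists f : X -> Y, r = dis dX dY f])
                 (inf [set r | exists g : Y -> X, r = dis dY dX g]).

End GH.

(* X consists of the points (a, s) with a level a in {0, ..., 2N} and s a bool: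
   points on different levels a, b are at distance max(a, b) + 1 and the two
   points of level a at distance min(a + 1, N), which makes X ultrametric and
   gives every point a partner at distance exactly N.  Y is X together with one
   extra point p at distance 2N + 1 from all of X.  Lowering every level by one
   is a map Y -> X of distortion at most 2 (p goes to the top level), and X
   embeds isometrically in Y, so the modified distance is at most 1.  For a
   pair f : X -> Y, g : Y -> X of small codistortion, however, f must send g p
   to p; comparing d_X (g p, x') = N for the partner x' of g p with
   d_Y (p, f x') in {0, 2N + 1} shows that f has distortion at least N, so the
   Gromov--Hausdorff distance is at least N / 2. *)
From HB Require Import structures.
From mathcomp Require Import all_boot all_order all_algebra.
From mathcomp Require Import boolp classical_sets reals.
From mathcomp Require Import zify lra.
Import Order.TTheory GRing.Theory Num.Theory.
Local Open Scope ring_scope.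

Set Implicit Arguments.
Unset Strict Implicit.
Unset Printing Implicit Defensive.

Section Distortion.
Variables (R : realType) (X Y : Type) (dX : X -> X -> R) (dY : Y -> Y -> R) (M : R).
Hypotheses (dX_bound : forall x x', 0 <= dX x x' <= M)
           (dY_bound : forall y y', 0 <= dY y y' <= M).

Let norm_sub_le a b : 0 <= a <= M -> 0 <= b <= M -> `|a - b| <= M.
Proof. by move=> /andP[? ?] /andP[? ?]; rewrite ler_norml; apply/andP; split; lra. Qed.

Lemma dis_ub (f : X -> Y) x x' : `|dX x x' - dY (f x) (f x')| <= dis dX dY f.
Proof.
apply: ub_le_sup; last by exists x, x'.
by exists M => _ [a [b ->]]; apply: norm_sub_le.
Qed.

Lemma codis_ub (f : X -> Y) (g : Y -> X) x y :
  `|dX x (g y) - dY (f x) y| <= codis dX dY f g.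
Proof.
apply: ub_le_sup; last by exists x, y.
by exists M => _ [a [b ->]]; apply: norm_sub_le.
Qed.

Lemma dis_le (x0 : X) (f : X -> Y) (K : R) :
  (forall x x', `|dX x x' - dY (f x) (f x')| <= K) -> dis dX dY f <= K.
Proof.
move=> fK; apply: ge_sup; last by move=> _ [a [b ->]].
by exists `|dX x0 x0 - dY (f x0) (f x0)|, x0, x0.
Qed.

Lemma dis_ge0 (x0 : X) (f : X -> Y) : 0 <= dis dX dY f.
Proof. exact: le_trans (normr_ge0 _) (dis_ub f x0 x0). Qed.

End Distortion.

Section GromovHausdorffBounds.
Variables (R : realType) (X Y : Type) (dX : X -> X -> R) (dY : Y -> Y -> R).
Variables (x0 : X) (y0 : Y).

Lemma dGH_ge (L : R) :
  (forall f g, L <= Num.max (dis dX dY f) (Num.max (dis dY dX g) (codis dX dY f g))) ->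
  L / 2 <= dGH dX dY.
Proof.
move=> Lfg; have : L <= inf [set r | exists f g,
    r = Num.max (dis dX dY f) (Num.max (dis dY dX g) (codis dX dY f g))].
  apply: lb_le_inf; last by move=> _ [f [g ->]].
  by eexists; exists (fun=> y0), (fun=> x0).
by rewrite /dGH; lra.
Qed.

Variable M : R.
Hypotheses (dX_bound : forall x x', 0 <= dX x x' <= M)
           (dY_bound : forall y y', 0 <= dY y y' <= M).

Lemma dGH_mod_le (K : R) (f : X -> Y) (g : Y -> X) :
  dis dX dY f <= K -> dis dY dX g <= K -> dGH_mod dX dY <= K / 2.
Proof.
move=> fK gK.
have infX : inf [set r | exists f, r = dis dX dY f] <= K.
  apply: le_trans fK; apply: ge_inf; last by exists f.
  by exists 0 => _ [h ->]; apply: dis_ge0 dX_bound dY_bound x0 h.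
have infY : inf [set r | exists g, r = dis dY dX g] <= K.
  apply: le_trans gK; apply: ge_inf; last by exists g.
  by exists 0 => _ [h ->]; apply: dis_ge0 dY_bound dX_bound y0 h.
have : Num.max (inf [set r | exists f, r = dis dX dY f])
               (inf [set r | exists g, r = dis dY dX g]) <= K by rewrite ge_max infX.
by rewrite /dGH_mod; lra.
Qed.

End GromovHausdorffBounds.

Lemma is_metric_natr (R : realType) (T : Type) (d : T -> T -> nat) :
  (forall x y, d x y = 0%N <-> x = y) -> (forall x y, d x y = d y x) ->
  (forall x y z, d x z <= d x y + d y z)%N ->
  is_metric (fun x y => (d x y)%:R : R).
Proof.
move=> d0 dC dtri; split=> [x y|x y|x y z]; last by rewrite -natrD ler_nat.
- by rewrite -(d0 x y); split=> [/eqP|->//]; rewrite pnatr_eq0 => /eqP.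
- by rewrite dC.
Qed.

Lemma is_ultrametric_natr (R : realType) (T : Type) (d : T -> T -> nat) :
  (forall x y z, d x z <= maxn (d x y) (d y z))%N ->
  is_ultrametric (fun x y => (d x y)%:R : R).
Proof. by move=> dU x y z; rewrite le_max !ler_nat -leq_max. Qed.

Section AdjoinPoint.
Variables (R : realType) (T : Type) (d : T -> T -> R) (D : R).
Hypotheses (D_gt0 : 0 < D) (d_bound : forall x y, 0 <= d x y <= D).

Definition adjoin_point (x y : option T) : R :=
  match x, y with
  | Some a, Some b => d a b
  | None, None => 0
  | _, _ => D
  end.

Lemma adjoin_point_bound x y : 0 <= adjoin_point x y <= D.
Proof. by case: x y => [a|] [b|] //=; rewrite ?lexx ?ltW. Qed.

Lemma is_metric_adjoin_point : is_metric d -> is_metric adjoin_point.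
Proof.
case=> d0 dC dtri; split=> [x y|x y|x y z].
- have /eqP D_neq0 := lt0r_neq0 D_gt0.
  case: x y => [a|] [b|] //=; [by rewrite d0; split=> [->|[]] | by split=> // /D_neq0 ..].
- by case: x y => [a|] [b|] //=; rewrite dC.
- have := adjoin_point_bound x y; have := adjoin_point_bound y z.
  have := adjoin_point_bound x z.
  by case: x y z => [a|] [b|] [c|] /=; [move=> *; apply: dtri|lra..].
Qed.

Lemma is_ultrametric_adjoin_point : is_ultrametric d -> is_ultrametric adjoin_point.
Proof.
move=> dU x y z; have := adjoin_point_bound x z; have := adjoin_point_bound y z.
case: x y z => [a|] [b|] [c|] /=; first by move=> *; apply: dU.
all: by rewrite ?maxxx ?le_max ?lexx ?orbT //; lra.
Qed.

Lemma adjoin_point_far_ge (L : R) : is_metric d ->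
  (forall x, exists x', L <= d x x' <= D - L) ->
  forall f g, L <= Num.max (dis d adjoin_point f)
                    (Num.max (dis adjoin_point d g) (codis d adjoin_point f g)).
Proof.
case=> d0 _ _ far f g; rewrite leNgt !gt_max; apply/negP => /and3P[dis_f _ codis_fg].
have [x' /andP[Lx' x'L]] := far (g None).
have /andP[x'_ge0 _] := d_bound (g None) x'.
have := codis_ub d_bound adjoin_point_bound f g (g None) None.
rewrite (d0 _ _).2 // sub0r normrN.
case fgp: (f (g None)) => [z|] /= codis_ge.
  move/(le_lt_trans codis_ge): codis_fg; rewrite ltr_norml => /andP[? ?]; lra.
have := dis_ub d_bound adjoin_point_bound f (g None) x'; rewrite fgp.
case: (f x') => [z|] /= dis_ge; move/(le_lt_trans dis_ge): dis_f;
  rewrite ltr_norml => /andP[? ?]; lra.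
Qed.

Lemma dis_Some (x0 : T) : dis d adjoin_point Some = 0.
Proof.
apply/le_anti; rewrite (dis_ge0 d_bound adjoin_point_bound x0) andbT.
by apply: (dis_le (dY := adjoin_point) x0) => x x' /=; rewrite subrr normr0.
Qed.

End AdjoinPoint.

Definition comb_dist (N a b : nat) (s t : bool) : nat :=
  if a == b then (if s == t then 0%N else minn a.+1 N) else (maxn a b).+1.

Lemma comb_distC N a b s t : comb_dist N a b s t = comb_dist N b a t s.
Proof. by rewrite /comb_dist; case: (eqVneq a b) => ab; case: s; case: t => /=; lia. Qed.

Lemma comb_dist_eq0 N a b s t :
  (0 < N)%N -> comb_dist N a b s t = 0%N -> a = b /\ s = t.
Proof. by rewrite /comb_dist; case: (eqVneq a b) => ab; case: s; case: t => /=; lia. Qed.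

Lemma comb_distxx N a s : comb_dist N a a s s = 0%N.
Proof. by rewrite /comb_dist !eqxx. Qed.

Lemma comb_dist_ultra N a b c s t u :
  (comb_dist N a c s u <= maxn (comb_dist N a b s t) (comb_dist N b c t u))%N.
Proof.
rewrite /comb_dist; case: (eqVneq a b) => ab; case: (eqVneq a c) => ac;
  case: (eqVneq b c) => bc; case: s; case: t; case: u => /=; lia.
Qed.

Lemma comb_dist_le N a b s t : (comb_dist N a b s t <= (maxn a b).+1)%N.
Proof. by rewrite /comb_dist; case: (eqVneq a b) => ab; case: s; case: t => /=; lia. Qed.

Lemma comb_dist_pred N a b s t :
  (comb_dist N a b s t <= comb_dist N a.-1 b.-1 s t + 2)%N /\
  (comb_dist N a.-1 b.-1 s t <= comb_dist N a b s t + 2)%N.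
Proof.
rewrite /comb_dist; case: (eqVneq a b) => ab; case: (eqVneq a.-1 b.-1) => ab';
  case: s; case: t => /=; lia.
Qed.

Lemma comb_dist_top N b s t : (b < N.*2)%N -> comb_dist N N.*2 b s t = N.*2.+1.
Proof. by rewrite /comb_dist; case: (eqVneq N.*2 b) => ab /=; lia. Qed.

Notation comb N := ('I_(N.*2).+1 * bool)%type.

Section Comb.
Variables (R : realType) (N : nat).
Hypothesis N_gt0 : (0 < N)%N.

Definition comb_metric (x y : comb N) : R := (comb_dist N x.1 y.1 x.2 y.2)%:R.

Lemma comb_metric_bound x y : 0 <= comb_metric x y <= (N.*2.+1)%:R.
Proof.
rewrite ler0n ler_nat (leq_trans (comb_dist_le _ _ _ _ _)) //.
by rewrite gtn_max !ltn_ord.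
Qed.

Lemma is_metric_comb : is_metric comb_metric.
Proof.
apply: is_metric_natr => [[i s] [j t]|[i s] [j t]|[i s] [j t] [k u]] /=.
- split=> [/comb_dist_eq0-/(_ N_gt0) [/val_inj-> ->] //|[-> ->]].
  exact: comb_distxx.
- exact: comb_distC.
- by have := comb_dist_ultra N i j k s t u; lia.
Qed.

Lemma is_ultrametric_comb : is_ultrametric comb_metric.
Proof. by apply: is_ultrametric_natr => [[i s] [j t] [k u]]; apply: comb_dist_ultra. Qed.

Lemma comb_far (x : comb N) : exists x', comb_metric x x' = N%:R.
Proof.
case: x => i s.
suff [j [t ijN]] : exists (j : 'I_(N.*2).+1) t, comb_dist N i j s t = N.
  by exists (j, t); rewrite /comb_metric /= ijN.
case: (leqP N i.+1) => iN.
  by exists i, (~~ s); rewrite /comb_dist eqxx; case: s => /=; lia.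
exists (inord N.-1), s; rewrite /comb_dist inordK; last by lia.
by case: (eqVneq (nat_of_ord i) N.-1) => /=; lia.
Qed.

Definition comb_lower (y : option (comb N)) : comb N :=
  if y is Some (i, s) then (inord i.-1, s) else (ord_max, false).

Lemma dis_comb_lower :
  dis (adjoin_point comb_metric (N.*2.+1)%:R) comb_metric comb_lower <= 2.
Proof.
have lower_val (i : 'I_(N.*2).+1) : (inord i.-1 : 'I_(N.*2).+1) = i.-1 :> nat.
  by rewrite inordK //; have := ltn_ord i; lia.
have lower_top (i : 'I_(N.*2).+1) s t :
    comb_metric (inord i.-1, s) (ord_max, t) = (N.*2.+1)%:R.
  by rewrite /comb_metric /= lower_val comb_distC comb_dist_top //; have := ltn_ord i; lia.
apply: (dis_le (dY := comb_metric) None) => [[[i s]|] [[j t]|]] /=.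
- rewrite /comb_metric /= !lower_val; have [] := comb_dist_pred N i j s t.
  rewrite -!(ler_nat R) !natrD ler_norml => ? ?; apply/andP; split; lra.
- by rewrite lower_top subrr normr0.
- by rewrite /comb_metric comb_distC -/(comb_metric _ _) lower_top subrr normr0.
- by rewrite /comb_metric comb_distxx subrr normr0.
Qed.
End Comb.

Arguments comb_metric : clear implicits.

Theorem theorem2 (R : realType) (C : R) (hC : 0 < C) :
  exists (X Y : finType) (dX : X -> X -> R) (dY : Y -> Y -> R),
    [/\ (0 < #|X|)%N /\ (0 < #|Y|)%N,
        is_metric dX /\ is_metric dY,
        is_ultrametric dX /\ is_ultrametric dY &
        dGH dX dY > C * dGH_mod dX dY].
Proof.
pose N := (Num.bound (2 * C)).+1.
have N_gt0 : (0 < N)%N by [].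
have CN : 2 * C < N%:R.
  by apply: lt_le_trans (archi_boundP _) _; [lra | rewrite ler_nat].
pose D : R := (N.*2.+1)%:R.
have D_gt0 : 0 < D by rewrite ltr0n.
have DN : D = 2 * N%:R + 1 by rewrite /D -addn1 natrD -muln2 natrM mulrC.
pose dX := comb_metric R N; have dX_bound := @comb_metric_bound R N.
pose dY := adjoin_point dX D; have dY_bound := adjoin_point_bound D_gt0 dX_bound.
exists (comb N), (option (comb N)), dX, dY; split.
- by split; apply/card_gt0P; [exists (ord0, false) | exists None].
- have dX_metric : is_metric dX := is_metric_comb R N_gt0.
  by split; last exact: is_metric_adjoin_point D_gt0 dX_bound dX_metric.
- have dX_ultra : is_ultrametric dX by apply: is_ultrametric_comb.
  by split; last exact: is_ultrametric_adjoin_point D_gt0 dX_bound dX_ultra.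
have mod_le : dGH_mod dX dY <= 2 / 2.
  apply: (dGH_mod_le (ord0, false) None dX_bound dY_bound (f := Some) _
    (dis_comb_lower R N_gt0)).
  by rewrite (dis_Some D_gt0 dX_bound (ord0, false)).
have GH_ge : N%:R / 2 <= dGH dX dY.
  apply: (dGH_ge (ord0, false) None).
  apply: (adjoin_point_far_ge D_gt0 dX_bound (is_metric_comb R N_gt0)) => x.
  have [x' xx'] := comb_far R N_gt0 x.
  by exists x'; rewrite xx' DN; apply/andP; split; lra.
have := ler_wpM2l (ltW hC) mod_le; lra.
Qed.
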